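(* For every positive integer $L$, every $Y\ge1$ and every $\varepsilon>0$, \[ S(L,Y):=\sum_{\substack{\ell\mid L^\infty\\ \ell\le Y}}\frac{\ell}{\nu(\ell)^2}\Big(\sum_{d\mid\ell}c_\ell(d)d^{1/2}\Big)^2\ll_\varepsilon Y^{\varepsilon}\tau(L), \] where $\tau$ is the divisor function.
   Context: $\nu$ is the completely multiplicative function with $\nu(p)=p+1$ for primes $p$. $\ell\mid L^\infty$ means every prime factor of $\ell$ divides $L$. The Chebyshev coefficients $c_{j,n}$ are defined by $x^n=\sum_{j=0}^n c_{j,n}U_j(x/2)$, with $U_j$ the Chebyshev polynomials of the second kind; for $d\mid\ell$, $c_\ell(d)=\prod_{p\mid\ell}c_{j_p,n_p}$ where $p^{j_p}\|d$, $p^{n_p}\|\ell$. *)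

From Stdlib Require Import Reals ClassicalEpsilon.
From mathcomp Require Import all_boot.

Set Implicit Arguments.
Unset Strict Implicit.
Unset Printing Implicit Defensive.

Open Scope R_scope.

(* chebV j x = U_j(x/2): V_0 = 1, V_1 = x, V_{j+2} = x V_{j+1} - V_j. *)
Fixpoint chebV (j : nat) (x : R) : R :=
  match j with
  | O => 1
  | S j' => match j' with
            | O => x
            | S j'' => x * chebV j' x - chebV j'' x
            end
  end.

Definition cheb_coeffs (n : nat) : nat -> R :=
  epsilon (inhabits (fun _ : nat => 0))
    (fun c : nat -> R => forall x : R, x ^ n = sum_f_R0 (fun j => c j * chebV j x) n).

Definition cheb (j n : nat) : R := if (j <= n)%nat then cheb_coeffs n j else 0.

Definition nu (l : nat) : nat := \prod_(p <- primes l) (p.+1) ^ (logn p l).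

Definition c_ell (l d : nat) : R :=
  foldr Rmult 1 (map (fun p => cheb (logn p d) (logn p l)) (primes l)).

(* l | L^oo : every prime factor of l divides L *)
Definition divides_pow_inf (l L : nat) : bool := all (fun p => p %| L) (primes l).

Definition inner_sum (l : nat) : R :=
  foldr Rplus 0 (map (fun d => c_ell l d * sqrt (INR d)) (divisors l)).

Definition ell_range (L : nat) (Y : R) : seq nat :=
  [seq l <- iota 1 (Z.to_nat (up Y)) |
     divides_pow_inf l L && (if Rle_dec (INR l) Y then true else false)].

Definition S_sum (L : nat) (Y : R) : R :=
  foldr Rplus 0
    (map (fun l => INR l / (INR (nu l))^2 * (inner_sum l)^2) (ell_range L Y)).

Definition tau (n : nat) : nat := size (divisors n).

From Stdlib Require Import Reals Lra ZArith ClassicalEpsilon.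
From mathcomp Require Import all_boot zify.
From mathcomp Require Import Rstruct.

(* Every summand is at most 1.  The coefficient c_{j,k} counts the nonnegative
   lattice paths of length k ending at height j, so the factor of the inner sum
   at p^k || l is at most (p^(1/2) + p^(-1/2))^k, while
   l * prod_(p^k || l) (p^(1/2) + p^(-1/2))^(2k) = nu(l)^2.  Hence S(L,Y) is at
   most the number of l <= Y with l | L^oo, which by Rankin's trick is at most
   Y^eps * prod_(p | L) (1 - p^(-eps))^(-1).  A factor is at most 2 once
   p >= 2^(1/eps), and at most (1 - 2^(-eps))^(-1) for the finitely many smaller
   p; finally 2^omega(L) <= tau(L). *)

Set Implicit Arguments.
Unset Strict Implicit.
Unset Printing Implicit Defensive.

Open Scope R_scope.

Lemma big_Rplus_ge0 (I : Type) (r : seq I) (F : I -> R) :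
  (forall i, 0 <= F i) -> 0 <= \big[Rplus/0]_(i <- r) F i.
Proof. by move=> F0; apply: big_ind => //; [lra | move=> u v; lra]. Qed.

Lemma Rabs_big_Rplus_le (I : Type) (r : seq I) (F : I -> R) :
  Rabs (\big[Rplus/0]_(i <- r) F i) <= \big[Rplus/0]_(i <- r) Rabs (F i).
Proof.
elim: r => [|i r IH]; first by rewrite !big_nil Rabs_R0; lra.
by rewrite !big_cons; apply: Rle_trans (Rabs_triang _ _) _; lra.
Qed.

Lemma ler_big_Rplus (I : eqType) (r : seq I) (F G : I -> R) :
  (forall i, i \in r -> F i <= G i) ->
  \big[Rplus/0]_(i <- r) F i <= \big[Rplus/0]_(i <- r) G i.
Proof.
elim: r => [|i r IH] FG; rewrite ?big_nil ?big_cons; first lra.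
apply: Rplus_le_compat; first by apply: FG; rewrite mem_head.
by apply: IH => j jr; apply: FG; rewrite in_cons jr orbT.
Qed.

Lemma ler_big_Rplus_subset (I : eqType) (r s : seq I) (F : I -> R) :
  uniq r -> uniq s -> {subset r <= s} -> (forall i, 0 <= F i) ->
  \big[Rplus/0]_(i <- r) F i <= \big[Rplus/0]_(i <- s) F i.
Proof.
move=> r_uniq s_uniq sub_rs F0.
rewrite -[X in _ <= X](perm_big _ (permEl (perm_filterC (mem r) s))) big_cat /=.
have -> : \big[Rplus/0]_(i <- [seq i <- s | mem r i]) F i = \big[Rplus/0]_(i <- r) F i.
  apply: perm_big; apply: uniq_perm; [exact: filter_uniq | done |].
  move=> i; rewrite mem_filter /=.
  by apply/andP/idP => [[] // | ir]; split => //; exact: sub_rs.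
rewrite -[X in X <= _]Rplus_0_r; apply: Rplus_le_compat_l; exact: big_Rplus_ge0.
Qed.

Lemma big_Rplus_const1 (I : Type) (r : seq I) : \big[Rplus/0]_(i <- r) 1 = INR (size r).
Proof. by elim: r => [|i r IH]; rewrite ?big_nil ?big_cons // IH (S_INR (size r)); ring. Qed.

Lemma big_ord_Rplus_const1 n : \big[Rplus/0]_(i < n) 1 = INR n.
Proof. by elim: n => [|n IH]; rewrite ?big_ord0 // big_ord_recr IH S_INR. Qed.

Lemma big_Rmult_ge0 (I : eqType) (r : seq I) (F : I -> R) :
  (forall i, i \in r -> 0 <= F i) -> 0 <= \big[Rmult/1]_(i <- r) F i.
Proof.
elim: r => [|i r IH] F0; rewrite ?big_nil ?big_cons; first lra.
apply: Rmult_le_pos; first by apply: F0; rewrite mem_head.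
by apply: IH => j jr; apply: F0; rewrite in_cons jr orbT.
Qed.

Lemma big_Rmult_gt0 (I : eqType) (r : seq I) (F : I -> R) :
  (forall i, i \in r -> 0 < F i) -> 0 < \big[Rmult/1]_(i <- r) F i.
Proof.
elim: r => [|i r IH] F0; rewrite ?big_nil ?big_cons; first lra.
apply: Rmult_lt_0_compat; first by apply: F0; rewrite mem_head.
by apply: IH => j jr; apply: F0; rewrite in_cons jr orbT.
Qed.

Lemma ler_big_Rmult (I : eqType) (r : seq I) (F G : I -> R) :
  (forall i, i \in r -> 0 <= F i <= G i) ->
  \big[Rmult/1]_(i <- r) F i <= \big[Rmult/1]_(i <- r) G i.
Proof.
elim: r => [|i r IH] FG; rewrite ?big_nil ?big_cons; first lra.
have [F0 FGi] := FG i (mem_head _ _).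
have FGr j : j \in r -> 0 <= F j <= G j by move=> jr; apply: FG; rewrite in_cons jr orbT.
have Fr0 : 0 <= \big[Rmult/1]_(j <- r) F j by apply: big_Rmult_ge0 => j /FGr [].
by apply: Rmult_le_compat => //; exact: IH.
Qed.

Lemma sum_f_R0_big (F : nat -> R) n : sum_f_R0 F n = \big[Rplus/0]_(j < n.+1) F j.
Proof. by elim: n => [|n IH]; rewrite big_ord_recr /= ?big_ord0 ?IH //; lra. Qed.

Lemma geom_sum_le q N : 0 <= q < 1 -> \big[Rplus/0]_(i < N) q ^ i <= / (1 - q).
Proof.
move=> q01; have q1 : 0 < 1 - q by lra.
have telescope : (1 - q) * \big[Rplus/0]_(i < N) q ^ i = 1 - q ^ N.
  elim: N => [|N IH]; rewrite ?big_ord0 ?big_ord_recr /=; first ring.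
  by rewrite Rmult_plus_distr_l IH; ring.
have qN : 0 <= q ^ N by apply: pow_le; lra.
apply: (Rmult_le_reg_l (1 - q)) => //; rewrite telescope Rinv_r; lra.
Qed.

Lemma INR_big_prod (I : Type) (r : seq I) (F : I -> nat) :
  INR (\prod_(i <- r) F i)%N = \big[Rmult/1]_(i <- r) INR (F i).
Proof. by elim: r => [|i r IH]; rewrite ?big_nil ?big_cons // mult_INR IH. Qed.

Lemma INR_expn m n : INR (m ^ n)%N = INR m ^ n.
Proof. by elim: n => [|n IH]; rewrite ?expn0 // expnS mult_INR IH. Qed.

Lemma INR_prime_gt1 p : prime p -> 1 < INR p.
Proof. by move=> p_pr; apply: lt_1_INR; apply/ltP; exact: prime_gt1. Qed.

Lemma Rpower_gt1 x e : 1 < x -> 0 < e -> 1 < Rpower x e.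
Proof. by move=> x1 e_gt0; rewrite -(Rpower_O x); [apply: Rpower_lt | lra]. Qed.

Lemma Rpower_pow_l x n e : 0 < x -> Rpower (x ^ n) e = Rpower x e ^ n.
Proof.
move=> x_gt0; rewrite -Rpower_pow // Rpower_mult Rmult_comm -Rpower_mult Rpower_pow //.
exact: exp_pos.
Qed.

Lemma Rpower_big_Rmult (I : eqType) (r : seq I) (F : I -> R) e :
  (forall i, i \in r -> 0 < F i) ->
  Rpower (\big[Rmult/1]_(i <- r) F i) e = \big[Rmult/1]_(i <- r) Rpower (F i) e.
Proof.
elim: r => [|i r IH] F0; rewrite ?big_nil ?big_cons.
  by rewrite /Rpower ln_1 Rmult_0_r exp_0.
have Fr0 j : j \in r -> 0 < F j by move=> jr; apply: F0; rewrite in_cons jr orbT.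
rewrite -IH // Rpower_mult_distr //; first by apply: F0; rewrite mem_head.
exact: big_Rmult_gt0.
Qed.

(** * The Chebyshev coefficients *)

(* [ballot j n] is the number of lattice paths of length n from 0 to j that
   stay nonnegative; its recursion mirrors x U_j = U_(j+1) + U_(j-1). *)
Fixpoint ballot (j n : nat) {struct n} : nat :=
  match n with
  | 0 => (j == 0)%N
  | n'.+1 => ((if j is j'.+1 then ballot j' n' else 0) + ballot j.+1 n')%N
  end.

Lemma ballot_eq0 n j : (n < j)%N -> ballot j n = 0%N.
Proof. by elim: n j => [|n IH] [|j] //= ltnj; rewrite !IH //; lia. Qed.

Lemma big_ballotS (F : nat -> R) n N :
  \big[Rplus/0]_(j < N.+1) (INR (ballot j n.+1) * F j) =
  \big[Rplus/0]_(j < N) (INR (ballot j n) * F j.+1) +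
  \big[Rplus/0]_(j < N.+1) (INR (ballot j.+1 n) * F j).
Proof.
rewrite (eq_bigr (fun j : 'I_N.+1 =>
  INR (if (j : nat) is j'.+1 then ballot j' n else 0) * F j + INR (ballot j.+1 n) * F j)).
  by rewrite big_split /= big_ord_recl /= Rmult_0_l Rplus_0_l.
by move=> j _; rewrite /= plus_INR; ring.
Qed.

Lemma chebV_recr x j :
  x * chebV j x = chebV j.+1 x + (if j is j'.+1 then chebV j' x else 0).
Proof. by case: j => [|[|j]] /=; ring. Qed.

Lemma pow_chebV x n N : (n < N)%N ->
  x ^ n = \big[Rplus/0]_(j < N) (INR (ballot j n) * chebV j x).
Proof.
elim: n N => [|n IH] [|N] // ltnN.
  by rewrite big_ord_recl big1 /= => [|j _]; ring.
case: N ltnN => [//|N] ltnN.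
rewrite (big_ballotS (chebV^~ x)) [x ^ _]/= (IH N.+1 ltnN) big_distrr /=.
rewrite (eq_bigr (fun j : 'I_N.+1 => INR (ballot j n) * chebV j.+1 x +
   INR (ballot j n) * (if (j : nat) is j'.+1 then chebV j' x else 0))); last first.
  by move=> j _; rewrite -Rmult_assoc (Rmult_comm x) Rmult_assoc chebV_recr; ring.
rewrite big_split; congr (_ + _).
rewrite big_ord_recl /= Rmult_0_r Rplus_0_l.
rewrite big_ord_recr big_ord_recr /= !ballot_eq0 //; last exact: ltnW.
by rewrite !Rmult_0_l !Rplus_0_r.
Qed.

Lemma chebV_growth x j : 2 <= x ->
  1 <= chebV j x /\ (x - 1) * chebV j x <= chebV j.+1 x.
Proof.
move=> x2; elim: j => [|j [V1 Vx]] /=; first lra.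
by case: j V1 Vx => [|j] /= V1 Vx; split; nra.
Qed.

Lemma chebV_le x j k : 2 <= x -> (j <= k)%N -> chebV j x <= chebV k x.
Proof.
move=> x2; elim: k => [|k IH]; first by rewrite leqn0 => /eqP ->; lra.
rewrite leq_eqVlt => /orP [/eqP -> | /IH Vjk]; first lra.
have [V1 Vx] := chebV_growth k x2; nra.
Qed.

Lemma chebV_lead_coef_eq0 N (a : nat -> R) :
  (forall x, \big[Rplus/0]_(j < N.+1) (a j * chebV j x) = 0) -> a N = 0.
Proof.
case: N => [|M] a0; first by have := a0 0; rewrite big_ord_recl big_ord0 /=; lra.
apply: NNPP => aM0.
set A := \big[Rplus/0]_(j < M.+1) Rabs (a j).
have A0 : 0 <= A by apply: big_Rplus_ge0 => j; apply: Rabs_pos.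
have aM : 0 < Rabs (a M.+1) by apply: Rabs_pos_lt.
pose x := 2 + A / Rabs (a M.+1).
have Aa0 : 0 <= A / Rabs (a M.+1).
  by apply: Rmult_le_pos => //; left; apply: Rinv_0_lt_compat.
have x2 : 2 <= x by rewrite /x; lra.
have [V1 Vx] := chebV_growth M x2.
(* the top term dominates the lower ones for large x *)
have bound : Rabs (a M.+1) * chebV M.+1 x <= A * chebV M x.
  have sum0 := a0 x; rewrite big_ord_recr in sum0.
  rewrite -(Rabs_right (chebV M.+1 x)); last by have := chebV_growth M.+1 x2; lra.
  rewrite -Rabs_mult.
  have -> : a M.+1 * chebV M.+1 x =
            - \big[Rplus/0]_(j < M.+1) (a j * chebV j x) by simpl in sum0 |- *; lra.
  rewrite Rabs_Ropp.
  apply: Rle_trans; first exact: Rabs_big_Rplus_le.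
  rewrite /A big_distrl; apply: ler_big_Rplus => j _ /=.
  rewrite Rabs_mult (Rabs_right (chebV j x)); last by have := chebV_growth j x2; lra.
  apply: Rmult_le_compat_l; first exact: Rabs_pos.
  by apply: chebV_le => //; rewrite -ltnS ltn_ord.
have xa : (x - 1) * Rabs (a M.+1) = Rabs (a M.+1) + A by rewrite /x; field; lra.
have := Rmult_le_compat_l _ _ _ (Rlt_le _ _ aM) Vx.
have : 0 < Rabs (a M.+1) * chebV M x by apply: Rmult_lt_0_compat; lra.
nra.
Qed.

Lemma chebV_coef_eq0 N (a : nat -> R) :
  (forall x, \big[Rplus/0]_(j < N) (a j * chebV j x) = 0) ->
  forall j, (j < N)%N -> a j = 0.
Proof.
elim: N => [|N IH] a0 j //; rewrite ltnS leq_eqVlt => /orP [/eqP -> | ltjN].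
  exact: chebV_lead_coef_eq0.
apply: IH ltjN => x; have := a0 x.
by rewrite big_ord_recr /= (chebV_lead_coef_eq0 a0) Rmult_0_l Rplus_0_r.
Qed.

Lemma cheb_ballot j n : cheb j n = INR (ballot j n).
Proof.
rewrite /cheb; case: ifP => lejn; last by rewrite ballot_eq0 // ltnNge lejn.
set P := fun c : nat -> R =>
  forall x : R, x ^ n = sum_f_R0 (fun j => c j * chebV j x) n.
have exP : exists c, P c.
  exists (fun j => INR (ballot j n)) => x.
  by rewrite sum_f_R0_big; exact: pow_chebV.
have c_spec := epsilon_spec (inhabits (fun _ : nat => 0)) P exP.
suff diff0 : forall x, \big[Rplus/0]_(j < n.+1)
    ((cheb_coeffs n j - INR (ballot j n)) * chebV j x) = 0.
  apply: Rminus_diag_uniq.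
  exact: (chebV_coef_eq0 (a := fun j => cheb_coeffs n j - INR (ballot j n)) diff0 lejn).
move=> x.
rewrite (eq_bigr (fun i : 'I_n.+1 => cheb_coeffs n i * chebV i x +
  (-1) * (INR (ballot i n) * chebV i x))); last by move=> i _; ring.
rewrite big_split -big_distrr /= -(sum_f_R0_big (fun i => cheb_coeffs n i * chebV i x)).
by rewrite -c_spec -pow_chebV //; ring.
Qed.

Lemma ballot_sum_le s n N : 0 < s -> (n < N)%N ->
  \big[Rplus/0]_(j < N) (INR (ballot j n) * s ^ j) <= (s + / s) ^ n.
Proof.
move=> s0; elim: n N => [|n IH] [|N] // ltnN.
  by rewrite big_ord_recl big1 /= => [|j _]; [lra | ring].
have si : s * / s = 1 by field; lra.
rewrite (big_ballotS (pow s)).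
have lo : \big[Rplus/0]_(j < N) (INR (ballot j n) * s ^ j.+1) <= s * (s + / s) ^ n.
  rewrite (eq_bigr (fun j : 'I_N => s * (INR (ballot j n) * s ^ j))); last first.
    by move=> j _ /=; ring.
  by rewrite -big_distrr /=; apply: Rmult_le_compat_l; [lra | exact: IH].
have hi : s * \big[Rplus/0]_(j < N.+1) (INR (ballot j.+1 n) * s ^ j) <= (s + / s) ^ n.
  have := IH N.+2 (ltnW (ltnW ltnN)); rewrite big_ord_recl.
  set T := \big[Rplus/0]_(i < N.+1) _.
  have -> : T = s * \big[Rplus/0]_(j < N.+1) (INR (ballot j.+1 n) * s ^ j).
    by rewrite /T big_distrr; apply: eq_bigr => j _; rewrite lift0 /=; ring.
  by have := pos_INR (ballot 0 n); simpl; lra.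
have hi' := Rmult_le_compat_l _ _ _ (Rlt_le _ _ (Rinv_0_lt_compat _ s0)) hi.
rewrite -Rmult_assoc (Rmult_comm _ s) si Rmult_1_l in hi'.
rewrite -tech_pow_Rmult Rmult_plus_distr_r; lra.
Qed.

(** * Multiplicativity of divisor sums *)

Section DivisorsPrimePowerTimes.

Variables (p k m : nat).
Hypotheses (p_pr : prime p) (p_coprime_m : coprime p m) (m_gt0 : (0 < m)%N).

Let pX_gt0 i : (0 < p ^ i)%N. Proof. by rewrite expn_gt0 prime_gt0. Qed.

Lemma logn_pXM i d : (d %| m)%N -> logn p (p ^ i * d) = i.
Proof.
move=> dvd_dm; rewrite (lognM _ (pX_gt0 i) (dvdn_gt0 m_gt0 dvd_dm)) pfactorK //.
rewrite logn_coprime ?addn0 //.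
exact: coprime_dvdr dvd_dm p_coprime_m.
Qed.

Lemma logn_pXM_other q i d :
  q \in primes m -> (d %| m)%N -> logn q (p ^ i * d) = logn q d.
Proof.
move=> qm dvd_dm; rewrite (lognM _ (pX_gt0 i) (dvdn_gt0 m_gt0 dvd_dm)) lognX.
rewrite logn_prime //.
case: eqP => [eq_qp | _]; last by rewrite muln0.
by move: qm p_coprime_m; rewrite eq_qp mem_primes prime_coprime // => /and3P [_ _ ->].
Qed.

Lemma perm_divisors_pXM :
  perm_eq (divisors (p ^ k * m)) [seq (p ^ i * d)%N | i <- iota 0 k.+1, d <- divisors m].
Proof.
have pkm_gt0 : (0 < p ^ k * m)%N by rewrite muln_gt0 pX_gt0.
apply: uniq_perm; [exact: divisors_uniq | | move=> x].
  apply: allpairs_uniq; [exact: iota_uniq | exact: divisors_uniq |].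
  move=> [i d] [j e] mem_id mem_je.
  case/allpairsP: mem_id => [[i' d'] [/= _ dm [-> ->]]].
  case/allpairsP: mem_je => [[j' e'] [/= _ em [-> ->]]] /= eq_ide.
  rewrite -dvdn_divisors // in dm; rewrite -dvdn_divisors // in em.
  have eq_ij : i' = j' by rewrite -(logn_pXM i' dm) -(logn_pXM j' em) eq_ide.
  by move: eq_ide; rewrite eq_ij => /eqP; rewrite eqn_pmul2l // => /eqP ->.
rewrite -dvdn_divisors //; apply/idP/allpairsP => [dvd_x | [[i d] [ik dm ->]]].
  have x_gt0 : (0 < x)%N := dvdn_gt0 pkm_gt0 dvd_x.
  exists (logn p x, (x %/ p ^ logn p x)%N); split.
  - by rewrite mem_iota add0n ltnS -{1}(logn_pXM k (dvdnn m)) dvdn_leq_log.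
  - rewrite -dvdn_divisors // -(@Gauss_dvdr _ (p ^ k)).
      by apply: dvdn_trans dvd_x; apply: dvdn_div; exact: pfactor_dvdnn.
    apply: coprimeXr; rewrite /= coprime_sym prime_coprime //; apply/negP => dvd_p.
    have : (0 < logn p (x %/ p ^ logn p x))%N.
      by rewrite logn_gt0 mem_primes p_pr dvd_p divn_gt0 // dvdn_leq // pfactor_dvdnn.
    by rewrite logn_div ?pfactor_dvdnn // pfactorK // subnn.
  - by rewrite mulnC divnK // pfactor_dvdnn.
rewrite mem_iota add0n ltnS in ik; rewrite -dvdn_divisors // in dm; rewrite /=.
by apply: dvdn_mul => //; apply: dvdn_exp2l.
Qed.

Lemma perm_primes_pXM : (0 < k)%N -> perm_eq (primes (p ^ k * m)) (p :: primes m).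
Proof.
move=> k_gt0; apply: uniq_perm; [exact: primes_uniq | | move=> q].
  by rewrite /= primes_uniq andbT mem_primes p_pr m_gt0 /= -prime_coprime.
by rewrite primesM // primesX // primes_prime // !in_cons in_nil orbF.
Qed.

Lemma big_divisors_prod_logn_pXM (g : nat -> nat -> R) : (0 < k)%N ->
  \big[Rplus/0]_(d <- divisors m) \big[Rmult/1]_(q <- primes m) g q (logn q d)
  = \big[Rmult/1]_(q <- primes m) \big[Rplus/0]_(i < (logn q m).+1) g q i ->
  \big[Rplus/0]_(d <- divisors (p ^ k * m))
     \big[Rmult/1]_(q <- primes (p ^ k * m)) g q (logn q d)
  = \big[Rmult/1]_(q <- primes (p ^ k * m))
     \big[Rplus/0]_(i < (logn q (p ^ k * m)).+1) g q i.
Proof.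
move=> k_gt0 IH.
have local_i i : \big[Rplus/0]_(d <- divisors m)
     \big[Rmult/1]_(q <- primes (p ^ k * m)) g q (logn q (p ^ i * d))
   = g p i * \big[Rplus/0]_(d <- divisors m) \big[Rmult/1]_(q <- primes m) g q (logn q d).
  rewrite big_distrr; apply: eq_big_seq => d; rewrite -dvdn_divisors // => dm.
  rewrite (perm_big _ (perm_primes_pXM k_gt0)) big_cons logn_pXM //; congr (_ * _).
  by apply: eq_big_seq => q qm; rewrite logn_pXM_other.
rewrite (perm_big _ perm_divisors_pXM) big_allpairs_dep (eq_bigr _ (fun i _ => local_i i)).
rewrite -big_distrl IH [RHS](perm_big _ (perm_primes_pXM k_gt0)) [RHS]big_cons.
have -> : iota 0 k.+1 = index_iota 0 k.+1 by rewrite /index_iota subn0.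
rewrite (logn_pXM k (dvdnn m)) big_mkord.
by congr (_ * _); apply: eq_big_seq => q qm; rewrite logn_pXM_other.
Qed.

End DivisorsPrimePowerTimes.

Lemma big_divisors_prod_logn (g : nat -> nat -> R) l : (0 < l)%N ->
  \big[Rplus/0]_(d <- divisors l) \big[Rmult/1]_(q <- primes l) g q (logn q d)
  = \big[Rmult/1]_(q <- primes l) \big[Rplus/0]_(i < (logn q l).+1) g q i.
Proof.
elim/ltn_ind: l => l IH l_gt0.
have [l_le1 | l_gt1] := leqP l 1.
  have -> : l = 1%N by lia.
  by rewrite /= big_cons !big_nil /= Rplus_0_r.
set p := pdiv l; set k := logn p l; set m := (l %/ p ^ k)%N.
have p_pr : prime p by exact: pdiv_prime.
have pk_dvd : (p ^ k %| l)%N by exact: pfactor_dvdnn.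
have def_l : l = (p ^ k * m)%N by rewrite mulnC divnK.
have m_gt0 : (0 < m)%N by move: l_gt0; rewrite def_l muln_gt0 => /andP [].
have k_gt0 : (0 < k)%N by rewrite logn_gt0 mem_primes p_pr l_gt0 pdiv_dvd.
have p_coprime_m : coprime p m.
  rewrite prime_coprime //; apply/negP => dvd_pm.
  have : (0 < logn p m)%N by rewrite logn_gt0 mem_primes p_pr m_gt0 dvd_pm.
  by rewrite logn_div // pfactorK // subnn.
have m_lt_l : (m < l)%N.
  by rewrite [X in (_ < X)%N]def_l ltn_Pmull // -(expn0 p) ltn_exp2l ?prime_gt1.
by rewrite def_l; apply: big_divisors_prod_logn_pXM => //; exact: IH.
Qed.

Lemma prime_decomp_dvdn l d : (0 < l)%N -> (d %| l)%N ->
  d = (\prod_(p <- primes l) p ^ logn p d)%N.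
Proof.
move=> l_gt0 dvd_dl; have d_gt0 : (0 < d)%N := dvdn_gt0 l_gt0 dvd_dl.
rewrite {1}(prod_prime_decomp d_gt0) prime_decompE big_map /=.
rewrite -(perm_big _ (permEl (perm_filterC (mem (primes d)) (primes l)))) big_cat /=.
rewrite [X in (_ * X)%N]big1_seq ?muln1 => [|p]; last first.
  rewrite mem_filter /= -logn_gt0 lt0n negbK => /andP [/eqP -> _].
  by rewrite expn0.
apply: perm_big; apply: uniq_perm; [exact: primes_uniq | exact: filter_uniq (primes_uniq l)|].
move=> p; rewrite mem_filter /=; apply/idP/andP => [pd | [] //]; split => //.
move: pd; rewrite !mem_primes l_gt0 => /and3P [-> _ dvd_pd] /=.
exact: dvdn_trans dvd_pd dvd_dl.
Qed.

Lemma Rpower_dvdn l d e : (0 < l)%N -> (d %| l)%N ->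
  Rpower (INR d) e = \big[Rmult/1]_(p <- primes l) Rpower (INR p) e ^ logn p d.
Proof.
move=> l_gt0 dvd_dl; rewrite {1}(prime_decomp_dvdn l_gt0 dvd_dl) INR_big_prod.
have INR_p_gt0 p : p \in primes l -> 0 < INR p.
  by rewrite mem_primes => /andP [/INR_prime_gt1 p1 _]; lra.
rewrite Rpower_big_Rmult => [|p pl]; last by rewrite INR_expn; apply: pow_lt; exact: INR_p_gt0.
by apply: eq_big_seq => p pl; rewrite INR_expn Rpower_pow_l //; exact: INR_p_gt0.
Qed.

Lemma pow2_omega_le_tau L : (0 < L)%N -> \big[Rmult/1]_(p <- primes L) 2 <= INR (tau L).
Proof.
move=> L_gt0.
have -> : INR (tau L) = \big[Rmult/1]_(p <- primes L) INR (logn p L).+1.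
  rewrite /tau -big_Rplus_const1.
  rewrite (eq_bigr (fun d => \big[Rmult/1]_(p <- primes L) (fun _ _ => 1) p (logn p d))).
    rewrite (big_divisors_prod_logn (fun _ _ => 1)) //.
    by apply: eq_bigr => p _; rewrite big_ord_Rplus_const1.
  by move=> d _; rewrite big1.
apply: ler_big_Rmult => p; rewrite -logn_gt0 S_INR => k_gt0; split; first lra.
by have := le_INR 1 _ (elimT leP k_gt0); rewrite /=; lra.
Qed.

(** * Each summand is at most one *)

Lemma inner_sum_prod l : (0 < l)%N ->
  inner_sum l = \big[Rmult/1]_(p <- primes l) \big[Rplus/0]_(i < (logn p l).+1)
                   (INR (ballot i (logn p l)) * sqrt (INR p) ^ i).
Proof.
move=> l_gt0; rewrite /inner_sum foldrE big_map.
rewrite -(big_divisors_prod_logn (fun p i => INR (ballot i (logn p l)) * sqrt (INR p) ^ i)) //.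
apply: eq_big_seq => d; rewrite -dvdn_divisors // => dvd_dl.
have d_gt0 : 0 < INR d by apply: lt_0_INR; apply/ltP; exact: dvdn_gt0 l_gt0 dvd_dl.
rewrite /c_ell foldrE big_map -Rpower_sqrt // (Rpower_dvdn (/ 2) l_gt0 dvd_dl).
rewrite -big_split; apply: eq_big_seq => p; rewrite mem_primes => /andP [p_pr _] /=.
by rewrite Rpower_sqrt ?cheb_ballot //; have := INR_prime_gt1 p_pr; lra.
Qed.

Lemma summand_le1 l : (0 < l)%N -> INR l / INR (nu l) ^ 2 * inner_sum l ^ 2 <= 1.
Proof.
move=> l_gt0.
have sqrt_p_gt0 p : p \in primes l -> 0 < sqrt (INR p).
  rewrite mem_primes => /andP [p_pr _]; apply: sqrt_lt_R0.
  by have := INR_prime_gt1 p_pr; lra.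
set B := \big[Rmult/1]_(p <- primes l) (sqrt (INR p) + / sqrt (INR p)) ^ logn p l.
have inner_le : 0 <= inner_sum l <= B.
  rewrite inner_sum_prod //; split.
    apply: big_Rmult_ge0 => p pl; apply: big_Rplus_ge0 => i.
    by apply: Rmult_le_pos; [exact: pos_INR | apply: pow_le; exact: sqrt_pos].
  apply: ler_big_Rmult => p pl; split; last exact: ballot_sum_le (sqrt_p_gt0 p pl) _.
  apply: big_Rplus_ge0 => i.
  by apply: Rmult_le_pos; [exact: pos_INR | apply: pow_le; exact: sqrt_pos].
(* locally, p (sqrt p + 1/sqrt p)^2 = (p + 1)^2 *)
have l_B2 : INR l * (B * B) = INR (nu l) * INR (nu l).
  rewrite {1}(prime_decomp_dvdn l_gt0 (dvdnn l)) /nu !INR_big_prod /B -!big_split.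
  apply: eq_big_seq => p pl /=; rewrite INR_expn INR_expn S_INR -!Rpow_mult_distr.
  congr (pow _ _); have r_gt0 := sqrt_p_gt0 p pl.
  have := sqrt_sqrt (INR p) (pos_INR p); set r := sqrt (INR p) in r_gt0 * => <-.
  by field; lra.
have nu_gt0 : 0 < INR (nu l).
  by apply: lt_0_INR; apply/ltP; rewrite prodn_gt0 // => p; rewrite expn_gt0.
have key : INR l * inner_sum l ^ 2 <= INR (nu l) ^ 2.
  rewrite /= !Rmult_1_r -l_B2; apply: Rmult_le_compat_l; [exact: pos_INR | nra].
have -> : INR l / INR (nu l) ^ 2 * inner_sum l ^ 2 = INR l * inner_sum l ^ 2 / INR (nu l) ^ 2.
  by field; lra.
rewrite /Rdiv -(Rinv_r (INR (nu l) ^ 2)); last by apply: pow_nonzero; lra.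
by apply: Rmult_le_compat_r => //; left; apply: Rinv_0_lt_compat; exact: pow_lt.
Qed.

(** * Rankin's trick *)

Definition rankin_threshold (e : R) : nat := Z.to_nat (up (Rpower 2 (/ e))).

Definition rankin_const (e : R) : R := / (1 - Rpower 2 (- e)).

Lemma rankin_const_ge1 e : 0 < e -> 1 <= rankin_const e.
Proof.
move=> e_gt0; have two_e1 : 1 < Rpower 2 e by apply: Rpower_gt1; lra.
have inv01 : 0 < / Rpower 2 e < 1.
  split; first by apply: Rinv_0_lt_compat; lra.
  by rewrite -Rinv_1; apply: Rinv_lt_contravar; lra.
by rewrite /rankin_const Rpower_Ropp -{1}Rinv_1; apply: Rinv_le_contravar; lra.
Qed.

Lemma geom_Rpower_prime_le e p N : 0 < e -> prime p ->
  \big[Rplus/0]_(i < N) Rpower (INR p) (- e) ^ i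
  <= 2 * (if (p < rankin_threshold e)%N then rankin_const e else 1).
Proof.
move=> e_gt0 p_pr; have p1 := INR_prime_gt1 p_pr.
have p2 : 2 <= INR p by apply: (le_INR 2); apply/leP; exact: prime_gt1.
have pe1 := Rpower_gt1 p1 e_gt0.
have pe2 : Rpower 2 e <= Rpower (INR p) e by apply: Rle_Rpower_l; lra.
have two_e1 : 1 < Rpower 2 e by apply: Rpower_gt1; lra.
rewrite Rpower_Ropp; set q := / Rpower (INR p) e.
have q01 : 0 < q < 1.
  split; first by apply: Rinv_0_lt_compat; lra.
  by rewrite -Rinv_1; apply: Rinv_lt_contravar; lra.
apply: Rle_trans (geom_sum_le N (conj (Rlt_le _ _ (proj1 q01)) (proj2 q01))) _.
case: ltnP => [_ | P0_le_p].
  have q_le : q <= / Rpower 2 e by apply: Rinv_le_contravar; lra.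
  have : / (1 - q) <= rankin_const e.
    have inv_lt1 : / Rpower 2 e < 1 by rewrite -Rinv_1; apply: Rinv_lt_contravar; lra.
    by rewrite /rankin_const Rpower_Ropp; apply: Rinv_le_contravar; lra.
  have : 0 < / (1 - q) by apply: Rinv_0_lt_compat; lra.
  lra.
have p_ge : Rpower 2 (/ e) <= INR p.
  have [up_gt _] := archimed (Rpower 2 (/ e)).
  have up_ge0 : (0 <= up (Rpower 2 (/ e)))%Z.
    by apply: le_IZR; have := exp_pos (/ e * ln 2); rewrite /Rpower in up_gt *; lra.
  apply: Rlt_le; apply: Rlt_le_trans up_gt _.
  by rewrite -(Z2Nat.id _ up_ge0) -INR_IZR_INZ; apply: le_INR; apply/leP.
have pe_ge2 : 2 <= Rpower (INR p) e.
  have <- : Rpower (Rpower 2 (/ e)) e = 2 by rewrite Rpower_mult Rinv_l ?Rpower_1; lra.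
  by apply: Rle_Rpower_l; [lra | split; [exact: exp_pos | done]].
have : q <= / 2 by apply: Rinv_le_contravar; lra.
rewrite Rmult_1_r -(Rinv_inv 2) => q_half; apply: Rinv_le_contravar; lra.
Qed.

Lemma big_Rmult_if_lt_le (s : seq nat) P0 B : uniq s -> 1 <= B ->
  \big[Rmult/1]_(p <- s) (if (p < P0)%N then B else 1) <= B ^ P0.
Proof.
move=> s_uniq B1.
have -> : \big[Rmult/1]_(p <- s) (if (p < P0)%N then B else 1)
          = B ^ count (fun p => p < P0)%N s.
  elim: s {s_uniq} => [|p s IH]; rewrite ?big_nil ?big_cons ?IH //=.
  by case: ifP => _; rewrite /= add0n; ring.
apply: Rle_pow => //; apply/leP.
rewrite -size_filter -[X in (_ <= X)%N](size_iota 0 P0).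
apply: uniq_leq_size; first exact: filter_uniq.
by move=> p; rewrite mem_filter mem_iota add0n => /andP [-> _].
Qed.

Lemma sum_divisors_Rpower_le M e : (0 < M)%N -> 0 < e ->
  \big[Rplus/0]_(d <- divisors M) Rpower (INR d) (- e)
  <= \big[Rmult/1]_(p <- primes M) 2 * rankin_const e ^ rankin_threshold e.
Proof.
move=> M_gt0 e_gt0.
rewrite (eq_big_seq (fun d =>
  \big[Rmult/1]_(p <- primes M) Rpower (INR p) (- e) ^ logn p d)); last first.
  by move=> d; rewrite -dvdn_divisors // => dvd_dM; rewrite (Rpower_dvdn (- e) M_gt0 dvd_dM).
rewrite (big_divisors_prod_logn (fun p i => Rpower (INR p) (- e) ^ i)) //.
apply: Rle_trans (_ : _ <= \big[Rmult/1]_(p <- primes M)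
   (2 * (if (p < rankin_threshold e)%N then rankin_const e else 1))) _.
  apply: ler_big_Rmult => p; rewrite mem_primes => /andP [p_pr _]; split.
    by apply: big_Rplus_ge0 => i; apply: pow_le; left; exact: exp_pos.
  exact: geom_Rpower_prime_le.
rewrite big_split /=; apply: Rmult_le_compat_l.
  by apply: big_Rmult_ge0 => *; lra.
exact: big_Rmult_if_lt_le (primes_uniq M) (rankin_const_ge1 e_gt0).
Qed.

Lemma mem_ell_range L Y l : (0 < L)%N -> l \in ell_range L Y ->
  [/\ (0 < l)%N, INR l <= Y & (l %| L ^ Z.to_nat (up Y))%N].
Proof.
move=> L_gt0; rewrite mem_filter mem_iota.
move=> /andP [/andP [dvd_L le_Y] /andP [l_gt0 l_le]].
have l_le_Y : INR l <= Y by move: le_Y; case: Rle_dec.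
split => //; apply/dvdn_partP => // p; rewrite mem_primes => /and3P [p_pr _ dvd_pl].
have dvd_pL : (p %| L)%N by move/allP: dvd_L; apply; rewrite mem_primes p_pr l_gt0.
rewrite p_part pfactor_dvdn ?expn_gt0 ?L_gt0 // lognX.
have : (0 < logn p L)%N by rewrite logn_gt0 mem_primes p_pr L_gt0.
have := ltn_logl p l_gt0; nia.
Qed.

Lemma S_sum_le_divisors L Y e : (0 < L)%N -> 0 <= e ->
  S_sum L Y <= Rpower Y e *
    \big[Rplus/0]_(d <- divisors (L ^ Z.to_nat (up Y))) Rpower (INR d) (- e).
Proof.
move=> L_gt0 e_ge0.
apply: Rle_trans (_ : _ <= Rpower Y e *
   \big[Rplus/0]_(l <- ell_range L Y) Rpower (INR l) (- e)) _.
  rewrite /S_sum foldrE big_map big_distrr.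
  apply: ler_big_Rplus => l /(mem_ell_range L_gt0) [l_gt0 l_le_Y _].
  apply: Rle_trans (summand_le1 l_gt0) _.
  have INR_l_ge1 : 1 <= INR l by apply: (le_INR 1); apply/leP.
  have : Rpower (INR l) e <= Rpower Y e by apply: Rle_Rpower_l; lra.
  have : 0 < Rpower (INR l) e by exact: exp_pos.
  rewrite Rpower_Ropp => le_pos le_Y; apply: (Rmult_le_reg_r (Rpower (INR l) e)) => //.
  by rewrite Rmult_assoc Rinv_l; lra.
apply: Rmult_le_compat_l; first by left; exact: exp_pos.
apply: ler_big_Rplus_subset; [exact/filter_uniq/iota_uniq | exact: divisors_uniq | |].
  move=> l /(mem_ell_range L_gt0) [_ _]; rewrite -dvdn_divisors //.
  by rewrite expn_gt0 L_gt0.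
by move=> d; left; exact: exp_pos.
Qed.

Theorem lemma6p2 :
  forall eps : R, 0 < eps ->
  exists C : R, forall (L : nat), (0 < L)%N -> forall Y : R, 1 <= Y ->
    S_sum L Y <= C * Rpower Y eps * INR (tau L).
Proof.
move=> eps eps_gt0.
exists (rankin_const eps ^ rankin_threshold eps) => L L_gt0 Y Y_ge1.
have U_gt0 : (0 < Z.to_nat (up Y))%N.
  have [up_gt _] := archimed Y.
  have : (1 < up Y)%Z by apply: lt_IZR; lra.
  lia.
apply: Rle_trans (S_sum_le_divisors Y L_gt0 (Rlt_le _ _ eps_gt0)) _.
rewrite [_ * Rpower Y eps]Rmult_comm Rmult_assoc.
apply: Rmult_le_compat_l; first by left; exact: exp_pos.
apply: Rle_trans (sum_divisors_Rpower_le _ eps_gt0) _; first by rewrite expn_gt0 L_gt0.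
rewrite primesX // Rmult_comm; apply: Rmult_le_compat_l.
  by apply: pow_le; have := rankin_const_ge1 eps_gt0; lra.
exact: pow2_omega_le_tau.
Qed.
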